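(* Let $s_X\colon X\to P$ and $s_Y\colon Y\to Q$ be stratified topological spaces such that the simplicial set $\mathrm{Exit}_P(X)$ is an $\infty$-category (i.e. a quasi-category). Assume we are given a stratified embedding $Y\hookrightarrow X$ which is a consecutive inclusion of strata: $Q\subseteq P$ is a consecutive (convex) subposet, i.e. if $a\le b\le c$ in $P$ with $a,c\in Q$ then $b\in Q$, and $Y=s_X^{-1}(Q)$ with $s_Y$ the restriction of $s_X$. Then $\mathrm{Exit}_Q(Y)$ is an $\infty$-category and the induced functor $\mathrm{Exit}_Q(Y)\to\mathrm{Exit}_P(X)$ is fully faithful.
   Context: A stratified space is a continuous map $s\colon X\to P$ where the poset $P$ carries the Alexandroff topology (upward closed sets are open). For such, the exit-path simplicial set $\mathrm{Exit}_P(X)$ is defined as the pullback of simplicial sets $N(P)\times_{\mathrm{Sing}(P)}\mathrm{Sing}(X)$, where $N(P)$ is the nerve of $P$, $\mathrm{Sing}$ is the singular simplicial set functor, $N(P)\to\mathrm{Sing}(P)$ is the canonical map and $\mathrm{Sing}(X)\to\mathrm{Sing}(P)$ is induced by $s$. $\infty$-categories are modeled as quasi-categories (fibrant objects of the Joyal model structure). *)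

From HB Require Import structures.
From mathcomp Require Import all_boot all_order all_algebra.
From mathcomp Require Import boolp classical_sets reals topology.
From Stdlib Require Import ProofIrrelevance FunctionalExtensionality.
Set Implicit Arguments. Unset Strict Implicit. Unset Printing Implicit Defensive.
Import Order.TTheory GRing.Theory Num.Theory.

Definition monob (m n : nat) (f : {ffun 'I_m.+1 -> 'I_n.+1}) : bool :=
  [forall i : 'I_m.+1, forall j : 'I_m.+1, (i <= j) ==> (f i <= f j)].
Definition mono (m n : nat) := {f : {ffun 'I_m.+1 -> 'I_n.+1} | monob f}.

Lemma monoP m n (f : mono m n) (i j : 'I_m.+1) : i <= j -> val f i <= val f j.
Proof. by case: f => f /= /forallP /(_ i) /forallP /(_ j) /implyP. Qed.

Lemma mono_eq m n (f g : mono m n) : (forall i, val f i = val g i) -> f = g.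
Proof. by move=> h; apply: val_inj; apply/ffunP. Qed.

Definition idm (n : nat) : mono n n.
Proof. by exists [ffun i => i]; apply/forallP=> i; apply/forallP=> j; rewrite !ffunE; apply/implyP. Defined.

Definition compm l m n (g : mono m n) (f : mono l m) : mono l n.
Proof.
exists [ffun i => val g (val f i)]; apply/forallP=> i; apply/forallP=> j.
by rewrite !ffunE; apply/implyP=> hij; apply: monoP; apply: monoP.
Defined.

Lemma compm_id_r m n (g : mono m n) : compm g (idm m) = g.
Proof. by apply: mono_eq => i; rewrite /= !ffunE. Qed.
Lemma compm_id_l m n (g : mono m n) : compm (idm n) g = g.
Proof. by apply: mono_eq => i; rewrite /= !ffunE. Qed.
Lemma compmA k l m n (h : mono m n) (g : mono l m) (f : mono k l) :
  compm h (compm g f) = compm (compm h g) f.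
Proof. by apply: mono_eq => i; rewrite /= !ffunE. Qed.

Record sSet := SSet {
  sx :> nat -> Type;
  sact : forall m n, mono m n -> sx n -> sx m;
  sact_id : forall n (x : sx n), sact (idm n) x = x;
  sact_comp : forall l m n (f : mono l m) (g : mono m n) (x : sx n),
    sact (compm g f) x = sact f (sact g x) }.
Arguments sact {s m n}.

Record sMap (K L : sSet) := SMap {
  smap :> forall n, K n -> L n;
  smap_nat : forall m n (f : mono m n) (x : K n), smap (sact f x) = sact f (smap x) }.
Arguments smap {K L} s {n}.

Lemma sig_eq (A : Type) (P : A -> Prop) (a b : sig P) : proj1_sig a = proj1_sig b -> a = b.
Proof.
case: a b => a pa [b pb] /= e; subst b; congr exist; exact: proof_irrelevance.
Qed.

Lemma sMap_eq K L (F G : sMap K L) : (forall n x, F n x = G n x) -> F = G.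
Proof.
case: F G => F hF [G hG] /= e.
have eFG : F = G by apply: functional_extensionality_dep => n;
  apply: functional_extensionality => x; exact: e.
subst G; congr SMap; exact: proof_irrelevance.
Qed.

Definition sid (K : sSet) : sMap K K := @SMap K K (fun n x => x) (fun _ _ _ _ => erefl).

Definition scomp K L M (G : sMap L M) (F : sMap K L) : sMap K M.
Proof. exists (fun n x => G n (F n x)) => m n f x; by rewrite !smap_nat. Defined.

Definition Delta (k : nat) : sSet.
Proof.
refine (@SSet (fun n => mono n k) (fun m n f x => compm x f) _ _).
- by move=> n x; exact: compm_id_r.
- by move=> l m n f g x; exact: compmA.
Defined.

Definition sProd (K L : sSet) : sSet.
Proof.
refine (@SSet (fun n => (K n * L n)%type) (fun m n f x => (sact f x.1, sact f x.2)) _ _).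
- by move=> n [x y] /=; rewrite !sact_id.
- by move=> l m n f g [x y] /=; rewrite !sact_comp.
Defined.

Definition closedP (K : sSet) (P : forall n, K n -> Prop) :=
  forall m n (f : mono m n) (x : K n), P n x -> P m (sact f x).

Definition sSub (K : sSet) (P : forall n, K n -> Prop) (hP : closedP P) : sSet.
Proof.
refine (@SSet (fun n => {x : K n | P n x})
          (fun m n f x => exist _ (sact f (proj1_sig x)) (hP _ _ f _ (proj2_sig x))) _ _).
- by move=> n x; apply: sig_eq; rewrite /= sact_id.
- by move=> l m n f g x; apply: sig_eq; rewrite /= sact_comp.
Defined.

Definition hornP (n : nat) (i : 'I_n.+1) m (f : Delta n m) : Prop :=
  exists j : 'I_n.+1, j != i /\ forall k, val f k != j.

Lemma hornP_closed n (i : 'I_n.+1) : closedP (@hornP n i).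
Proof.
move=> m l f x [j [hji hx]]; exists j; split=> // k /=.
by rewrite ffunE; apply: hx.
Qed.

Definition Horn (n : nat) (i : 'I_n.+1) : sSet := sSub (@hornP_closed n i).

Definition quasi_category (C : sSet) : Prop :=
  forall n (i : 'I_n.+1), (0 < i < n)%N ->
  forall F : sMap (Horn i) C, exists G : sMap (Delta n) C,
    forall m (x : Horn i m), G m (proj1_sig x) = F m x.

Definition constm (m n : nat) (c : 'I_n.+1) : mono m n.
Proof. by exists [ffun=> c]; apply/forallP=> i; apply/forallP=> j; rewrite !ffunE leqnn implybT. Defined.
Definition bang m : mono m 0 := constm m ord0.
Definition v0 m : Delta 1 m := constm m ord0.
Definition v1 m : Delta 1 m := constm m ord_max.

Definition cst (C : sSet) m (x : C 0) : C m := sact (bang m) x.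

Definition homotopic (K L : sSet) (F G : sMap K L) : Prop :=
  exists h : sMap (sProd K (Delta 1)) L,
    forall n (x : K n), h n (x, v0 n) = F n x /\ h n (x, v1 n) = G n x.

Definition homotopy_equivalence (K L : sSet) (F : sMap K L) : Prop :=
  exists G : sMap L K, homotopic (scomp G F) (sid K) /\ homotopic (scomp F G) (sid L).

Definition fprod m n (f : mono m n) : sMap (sProd (Delta m) (Delta 1)) (sProd (Delta n) (Delta 1)).
Proof.
exists (fun k ab => (compm f ab.1, ab.2)) => k l g [a b] /=.
by rewrite compmA.
Defined.

Definition FunD1 (C : sSet) : sSet.
Proof.
refine (@SSet (fun n => sMap (sProd (Delta n) (Delta 1)) C)
          (fun m n f H => scomp H (fprod f)) _ _).
- by move=> n H; apply: sMap_eq => k [a b] /=; rewrite compm_id_l.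
- by move=> l m n f g H; apply: sMap_eq => k [a b] /=; rewrite compmA.
Defined.

Definition homP (C : sSet) (x y : C 0) n (H : FunD1 C n) : Prop :=
  forall m (a : mono m n), H m (a, v0 m) = cst m x /\ H m (a, v1 m) = cst m y.

Lemma homP_closed C x y : closedP (@homP C x y).
Proof. by move=> m n f H hH k a /=; apply: hH. Qed.

(* Hom_C(x, y) = {x} x_C Fun(Delta^1, C) x_C {y} *)
Definition Hom (C : sSet) (x y : C 0) : sSet := sSub (@homP_closed C x y).

Definition homF (C D : sSet) (F : sMap C D) (x y : C 0) :
  sMap (Hom x y) (Hom (F 0 x) (F 0 y)).
Proof.
unshelve eexists.
- move=> n H; exists (scomp F (proj1_sig H)) => m a /=.
  by case: (proj2_sig H m a) => -> ->; rewrite /cst !smap_nat.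
- by move=> m n f H; apply: sig_eq; apply: sMap_eq.
Defined.

Definition fully_faithful (C D : sSet) (F : sMap C D) : Prop :=
  forall x y : C 0, homotopy_equivalence (homF F x y).


Section Top.
Variable R : realType.
Local Open Scope ring_scope.
Local Open Scope classical_set_scope.

Definition simplexb n (t : {ffun 'I_n.+1 -> R}) : bool :=
  [forall i, 0 <= t i] && (\sum_i t i == 1).
Definition tsimplex n := {t : {ffun 'I_n.+1 -> R} | simplexb t}.

Definition pushf m n (f : mono m n) (t : {ffun 'I_m.+1 -> R}) : {ffun 'I_n.+1 -> R} :=
  [ffun j => \sum_(i | val f i == j) t i].

Lemma pushf_simplex m n (f : mono m n) t : simplexb t -> simplexb (pushf f t).
Proof.
case/andP=> /forallP t0 /eqP t1; apply/andP; split.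
  by apply/forallP=> j; rewrite ffunE; apply: sumr_ge0 => i _.
apply/eqP; rewrite -{}t1 (partition_big (fun i => val f i) xpredT) //=.
by apply: eq_bigr => j _; rewrite ffunE.
Qed.

Definition push m n (f : mono m n) (t : tsimplex m) : tsimplex n :=
  exist _ (pushf f (val t)) (pushf_simplex f (valP t)).

Lemma push_id n (t : tsimplex n) : push (idm n) t = t.
Proof.
apply: val_inj; apply/ffunP=> j /=; rewrite ffunE.
rewrite (big_pred1 j) // => i /=; by rewrite ffunE.
Qed.

Lemma push_comp l m n (f : mono l m) (g : mono m n) (t : tsimplex l) :
  push (compm g f) t = push g (push f t).
Proof.
apply: val_inj; apply/ffunP=> k /=; rewrite !ffunE.
rewrite (partition_big (fun i => val f i) (fun j => val g j == k)); last first.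
  by move=> i; rewrite ffunE.
apply: eq_bigr => j hj; rewrite ffunE; apply: eq_bigl => i.
rewrite ffunE; case: (val f i =P j) => [->|]; by rewrite ?hj ?andbF.
Qed.

Definition Dopen n (A : set (tsimplex n)) : Prop :=
  forall t, A t -> exists e : R, 0 < e /\
    forall t' : tsimplex n, (forall i, `|val t' i - val t i| < e) -> A t'.

Definition scont (T : Type) (O : set (set T)) n (s : tsimplex n -> T) : Prop :=
  forall U, O U -> Dopen (s @^-1` U).

Lemma push_open m n (f : mono m n) (A : set (tsimplex n)) :
  Dopen A -> Dopen (push f @^-1` A).
Proof.
move=> hA t /hA [e [e0 he]]; exists (e / m.+1%:R); split.
  by rewrite divr_gt0 // ltr0n.
move=> t' ht'; apply: he => j /=; rewrite !ffunE -sumrB.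
apply: (le_lt_trans (ler_norm_sum _ _ _)).
apply: (@le_lt_trans _ _ (\sum_i `|val t' i - val t i|)).
  rewrite [X in _ <= X](bigID (fun i => val f i == j)) /= lerDl.
  by apply: sumr_ge0 => i _.
apply: (@lt_le_trans _ _ (\sum_(i < m.+1) (e / m.+1%:R))).
  by apply: ltr_sum => [|i _]; [apply/hasP; exists ord0; rewrite ?mem_index_enum | apply: ht'].
by rewrite sumr_const card_ord -[_ *+ _]mulr_natr divfK ?pnatr_eq0.
Qed.

Definition Sing (T : Type) (O : set (set T)) : sSet.
Proof.
refine (@SSet (fun n => {s : tsimplex n -> T | scont O s})
  (fun m n f s => exist (@scont T O m) (fun t => proj1_sig s (push f t))
     (fun U hU => push_open (f := f) (proj2_sig s U hU))) _ _).
- move=> n s; apply: sig_eq => /=; apply: functional_extensionality => t.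
  by rewrite push_id.
- move=> l m n f g s; apply: sig_eq => /=; apply: functional_extensionality => t.
  by rewrite push_comp.
Defined.

Definition Singmap (T T' : Type) (O : set (set T)) (O' : set (set T')) (g : T -> T')
  (hg : forall U, O' U -> O (g @^-1` U)) : sMap (Sing O) (Sing O').
Proof.
unshelve eexists.
- move=> n s; exists (fun t => g (proj1_sig s t)) => U hU.
  exact: (proj2_sig s _ (hg U hU)).
- by move=> m n f s; apply: sig_eq.
Defined.

Section Poset.
Variables (d : Order.disp_t) (P : porderType d).

(* open sets of the Alexandroff topology on P: the upward closed sets *)
Definition upset (U : set P) : Prop := forall a b : P, (a <= b)%O -> U a -> U b.

Definition nmono n (p : {ffun 'I_n.+1 -> P}) : bool :=
  [forall i : 'I_n.+1, forall j : 'I_n.+1, (i <= j)%N ==> (p i <= p j)%O].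

Lemma nmonoP n (p : {ffun 'I_n.+1 -> P}) (i j : 'I_n.+1) : nmono p -> (i <= j)%N -> (p i <= p j)%O.
Proof. by move=> /forallP /(_ i) /forallP /(_ j) /implyP. Qed.

Definition Nerve : sSet.
Proof.
unshelve refine (@SSet (fun n => {p : {ffun 'I_n.+1 -> P} | nmono p})
  (fun m n f p => exist _ [ffun i => proj1_sig p (val f i)] _) _ _).
- apply/forallP=> i; apply/forallP=> j; apply/implyP=> hij; rewrite !ffunE.
  by apply: nmonoP (proj2_sig p) _; apply: monoP.
- by move=> n p; apply: val_inj; apply/ffunP => i; rewrite /= !ffunE.
- by move=> l m n f g p; apply: val_inj; apply/ffunP => i; rewrite /= !ffunE.
Defined.

Definition maxsupp n (t : tsimplex n) : 'I_n.+1 :=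
  inord (\max_(i : 'I_n.+1 | 0 < val t i) (i : nat)).

Lemma maxsuppP n (t : tsimplex n) :
  0 < val t (maxsupp t) /\ forall i : 'I_n.+1, (maxsupp t < i)%N -> val t i = 0.
Proof.
have /andP [/forallP t0 /eqP t1] := valP t.
have [i0 hi0] : exists i, 0 < val t i.
  apply/not_existsP => hn; move: t1.
  rewrite big1 => [/eqP|i _]; first by rewrite eq_sym oner_eq0.
  by apply/eqP; rewrite eq_le t0 andbT leNgt; apply/negP => /(hn i).
have hpos : (0 < #|[pred i | (0 < val t i)%R]|)%N by apply/card_gt0P; exists i0.
case: (eq_bigmax_cond (fun i : 'I_n.+1 => (i : nat)) hpos) => k hk hmax.
have hmax' : \max_(i : 'I_n.+1 | 0 < val t i) (i : nat) = k.
  by rewrite -hmax; apply: eq_bigl.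
have -> : maxsupp t = k by rewrite /maxsupp hmax' inord_val.
split; first by [].
move=> i hki; apply/eqP; rewrite eq_le t0 andbT leNgt; apply/negP => hi.
have := @leq_bigmax_cond _ (fun i => 0 < val t i) (fun i : 'I_n.+1 => (i : nat)) i hi.
by rewrite hmax' leqNgt hki.
Qed.

Lemma maxsupp_eq n (t : tsimplex n) (k : 'I_n.+1) :
  0 < val t k -> (forall i : 'I_n.+1, (k < i)%N -> val t i = 0) -> maxsupp t = k.
Proof.
move=> hk hi; apply: val_inj; rewrite /maxsupp /=.
have -> : (\max_(i : 'I_n.+1 | 0 < val t i) (i : nat)) = k.
  apply/eqP; rewrite eqn_leq; apply/andP; split.
    apply/bigmax_leqP => i hti; rewrite leqNgt; apply/negP => /hi ht.
    by move: hti; rewrite ht ltxx.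
  exact: (@leq_bigmax_cond _ (fun i => 0 < val t i) (fun i : 'I_n.+1 => (i : nat)) k hk).
by rewrite inordK.
Qed.

Lemma maxsupp_push m n (f : mono m n) (t : tsimplex m) :
  maxsupp (push f t) = val f (maxsupp t).
Proof.
have [h0 h1] := maxsuppP t.
have tge0 : forall i, 0 <= val t i by case: t {h0 h1} => t /= /andP [/forallP ? _].
apply: maxsupp_eq.
  rewrite /= ffunE (bigD1 (maxsupp t)) //=.
  by apply: (lt_le_trans h0); rewrite lerDl; apply: sumr_ge0.
move=> j hj /=; rewrite ffunE; apply: big1 => i /eqP hij.
apply: h1; rewrite ltnNge; apply/negP => hle.
by have := monoP f hle; rewrite hij leqNgt hj.
Qed.

Lemma maxsupp_open n (k : 'I_n.+1) : Dopen [set t : tsimplex n | (k <= maxsupp t)%N].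
Proof.
move=> t /= hk; have [h0 h1] := maxsuppP t.
exists (val t (maxsupp t)); split => // t' ht'.
apply: (leq_trans hk); rewrite leqNgt; apply/negP => hlt.
have := ht' (maxsupp t); rewrite (maxsuppP t').2 // sub0r normrN.
by rewrite gtr0_norm // ltxx.
Qed.

Definition canon n (p : Nerve n) : tsimplex n -> P := fun t => proj1_sig p (maxsupp t).

Lemma canon_cont n (p : Nerve n) : scont upset (@canon n p).
Proof.
move=> U hU t ht; have hk := maxsupp_open (k := maxsupp t).
have [e [e0 he]] := hk t (leqnn _).
exists e; split => // t' /he /= hle.
by apply: hU ht; apply: nmonoP (proj2_sig p) hle.
Qed.

Definition NerveToSing : sMap Nerve (Sing upset).
Proof.
unshelve eexists.
- move=> n p; exact: (exist _ (@canon n p) (@canon_cont n p)).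
- move=> m n f p; apply: sig_eq => /=; apply: functional_extensionality => t.
  by rewrite /canon /= ffunE maxsupp_push.
Defined.

End Poset.

Definition nerve_map (d' : Order.disp_t) (Q : porderType d') (d : Order.disp_t) (P : porderType d) (j : Q -> P)
  (hj : forall a b, (a <= b)%O -> (j a <= j b)%O) : sMap (Nerve Q) (Nerve P).
Proof.
unshelve eexists.
- move=> n q; exists [ffun i => j (proj1_sig q i)].
  apply/forallP=> a; apply/forallP=> b; apply/implyP=> hab; rewrite !ffunE.
  by apply: hj; apply: nmonoP (proj2_sig q) hab.
- by move=> m n f q; apply: val_inj; apply/ffunP => i; rewrite /= !ffunE.
Defined.

End Top.

Local Open Scope classical_set_scope.


Definition pullP (A B C : sSet) (F : sMap A C) (G : sMap B C) n (ab : sProd A B n) : Prop :=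
  F n ab.1 = G n ab.2.

Lemma pullP_closed A B C (F : sMap A C) (G : sMap B C) : closedP (pullP F G).
Proof. by move=> m n f [a b]; rewrite /pullP /= => h; rewrite !smap_nat h. Qed.

Definition sPull A B C (F : sMap A C) (G : sMap B C) : sSet := sSub (pullP_closed (F := F) (G := G)).

Definition alex_cont (X : topologicalType) (d : Order.disp_t) (P : porderType d)
  (s : X -> P) : Prop := forall U, upset U -> open (s @^-1` U).

(* Exit_P(X) := N(P) x_{Sing(P)} Sing(X) *)
Definition Exit (R : realType) (X : topologicalType) (d : Order.disp_t) (P : porderType d)
  (s : X -> P) (hs : alex_cont s) : sSet :=
  sPull (NerveToSing R P) (@Singmap R X P (@open X) (@upset d P) s hs).

Lemma emb_mono (d d' : Order.disp_t) (Q : porderType d') (P : porderType d) (j : Q -> P)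
  (hj : forall a b, (j a <= j b)%O = (a <= b)%O) : forall a b, (a <= b)%O -> (j a <= j b)%O.
Proof. by move=> a b; rewrite hj. Qed.

Definition exit_map (R : realType) (X Y : topologicalType) (d d' : Order.disp_t)
  (P : porderType d) (Q : porderType d') (sX : X -> P) (sY : Y -> Q)
  (hsX : alex_cont sX) (hsY : alex_cont sY) (j : Q -> P) (e : Y -> X)
  (hj : forall a b, (a <= b)%O -> (j a <= j b)%O)
  (he : forall U, open U -> open (e @^-1` U))
  (hcomm : forall y, sX (e y) = j (sY y)) :
  sMap (Exit R hsY) (Exit R hsX).
Proof.
unshelve eexists.
- move=> n [[q s] hqs]; exists (nerve_map hj n q, @Singmap R Y X (@open Y) (@open X) e he n s).
  rewrite /pullP /=; apply: sig_eq => /=; apply: functional_extensionality => t.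
  rewrite /canon /= ffunE hcomm; congr j.
  by move: hqs; rewrite /pullP /= => /(congr1 (@proj1_sig _ _)) /= /(congr1 (fun f => f t)).
- move=> m n f [[q s] hqs]; apply: sig_eq => /=; congr pair.
  + by apply: val_inj; apply/ffunP => i; rewrite /= !ffunE.
Defined.

(* The functor Exit_Q(Y) -> Exit_P(X) is injective on simplices, and a simplex
   of Exit_P(X) lies in its image as soon as all its vertices do: the nerve
   component of a simplex is determined by its vertices, it records the stratum
   of every point of the singular component, and a singular simplex of X with
   values in s_X^-1(Q) lifts continuously to the subspace Y.  Through such a
   full simplicial subset, inner horns (whose vertices are those of the simplex)
   are filled, and the maps of mapping spaces are bijective on simplices, hence
   homotopy equivalences. *)

From HB Require Import structures.
From mathcomp Require Import all_boot all_order all_algebra.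
From mathcomp Require Import boolp classical_sets reals topology.
Set Implicit Arguments. Unset Strict Implicit. Unset Printing Implicit Defensive.
Import Order.TTheory.
Local Open Scope classical_set_scope.

Definition vertex (C : sSet) n (x : C n) (k : 'I_n.+1) : C 0 := sact (constm 0 k) x.

Lemma smap_vertex (C D : sSet) (F : sMap C D) n (x : C n) (k : 'I_n.+1) :
  vertex (F n x) k = F 0 (vertex x k).
Proof. by rewrite /vertex smap_nat. Qed.

Lemma Delta1_vertexP (b : Delta 1 0) : b = v0 0 \/ b = v1 0.
Proof.
have [b0|b1] := boolP (val b ord0 == ord0); [left | right];
  apply: mono_eq => i; rewrite (ord1 i) /= ffunE; apply/eqP => //.
by rewrite -val_eqE /=; case: (val b ord0) b1 => [[|[|k]] hk].
Qed.

Lemma inner_horn_vertex n (i : 'I_n.+1) (x : Delta n 0) :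
  (0 < i < n)%N -> hornP i x.
Proof.
case/andP=> i_gt0 i_ltn; have [x0|x_neq0] := eqVneq (val x ord0) ord0.
- exists ord_max; split; first by rewrite -val_eqE /= eq_sym (ltn_eqF i_ltn).
  by move=> k; rewrite (ord1 k) x0 -val_eqE /= (ltn_eqF (ltn_trans i_gt0 i_ltn)).
- exists ord0; split; first by rewrite -val_eqE /= eq_sym (gtn_eqF i_gt0).
  by move=> k; rewrite (ord1 k).
Qed.

Lemma homotopic_refl (K L : sSet) (F : sMap K L) : homotopic F F.
Proof.
have F1_nat m n (f : mono m n) (xb : sProd K (Delta 1) n) :
  F m (sact f xb).1 = sact f (F n xb.1) by rewrite /= smap_nat.
by exists (SMap F1_nat).
Qed.

Lemma homotopy_equivalence_bij (K L : sSet) (F : sMap K L) :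
  (forall n, injective (@smap _ _ F n)) -> (forall n (y : L n), exists x, F n x = y) ->
  homotopy_equivalence F.
Proof.
move=> F_inj F_surj; pose G n y := sval (cid (F_surj n y)).
have FGK n y : F n (G n y) = y by rewrite /G; case: cid.
have G_nat m n (f : mono m n) (y : L n) : G m (sact f y) = sact f (G n y).
  by apply: F_inj; rewrite smap_nat !FGK.
exists (SMap G_nat); split.
- have -> : scomp (SMap G_nat) F = sid K.
    by apply: sMap_eq => n x; apply: F_inj; rewrite /= FGK.
  exact: homotopic_refl.
- have -> : scomp F (SMap G_nat) = sid L by apply: sMap_eq => n y; rewrite /= FGK.
  exact: homotopic_refl.
Qed.

Section FullSimplicialSubset.
Variables (C D : sSet) (F : sMap C D).
Hypothesis F_inj : forall n, injective (@smap _ _ F n).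
Hypothesis F_full : forall n (z : D n),
  (forall k, exists w, F 0 w = vertex z k) -> exists w, F n w = z.

Lemma full_lift (K : sSet) (H : sMap K D) :
  (forall x : K 0, exists w, F 0 w = H 0 x) ->
  {G : sMap K C | forall n x, F n (G n x) = H n x}.
Proof.
move=> H_vert; have H_im n (x : K n) : exists w, F n w = H n x.
  by apply: F_full => k; rewrite smap_vertex; apply: H_vert.
pose G n x := sval (cid (H_im n x)).
have FGK n x : F n (G n x) = H n x by rewrite /G; case: cid.
have G_nat m n (f : mono m n) x : G m (sact f x) = sact f (G n x).
  by apply: F_inj; rewrite smap_nat !FGK smap_nat.
by exists (SMap G_nat).
Qed.

Lemma quasi_category_full : quasi_category D -> quasi_category C.
Proof.
move=> qcD n i i_inner h.
have [g hg] := qcD n i i_inner (scomp F h).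
have g_vert (x : Delta n 0) : exists w, F 0 w = g 0 x.
  pose xh : Horn i 0 := exist _ x (inner_horn_vertex x i_inner).
  by exists (h 0 xh); rewrite (hg 0 xh).
have [g' hg'] := full_lift g_vert.
by exists g' => m x; apply: F_inj; rewrite hg' hg.
Qed.

Lemma fully_faithful_full : fully_faithful F.
Proof.
move=> x y; apply: homotopy_equivalence_bij => [n H1 H2 /(congr1 sval) /= eqH|n H].
  apply: sig_eq; apply: sMap_eq => m ab; apply: F_inj.
  exact: (congr1 (fun G : sMap _ D => G m ab) eqH).
have H_vert (ab : sProd (Delta n) (Delta 1) 0) : exists w, F 0 w = sval H 0 ab.
  case: ab => a b; have [Ha0 Ha1] := svalP H 0 a.
  by case: (Delta1_vertexP b) => ->; [exists (cst 0 x) | exists (cst 0 y)];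
    rewrite ?Ha0 ?Ha1 /cst smap_nat.
have [G FGK] := full_lift H_vert.
have G_hom : homP x y G.
  move=> m a; have [Ha0 Ha1] := svalP H m a.
  by split; apply: F_inj; rewrite FGK /cst smap_nat ?Ha0 ?Ha1.
by exists (exist _ G G_hom); apply: sig_eq; apply: sMap_eq => m ab /=.
Qed.

End FullSimplicialSubset.

Lemma Exit_strata (R : realType) (X : topologicalType) (d : Order.disp_t)
  (P : porderType d) (s : X -> P) (hs : alex_cont s) n (z : Exit R hs n)
  (t : tsimplex R n) :
  sval (sval z).1 (maxsupp t) = s (sval (sval z).2 t).
Proof. by case: z => [[p u] /= /(congr1 (fun v => sval v t))]. Qed.

Lemma Exit_vertex_strata (R : realType) (X : topologicalType) (d : Order.disp_t)
  (P : porderType d) (s : X -> P) (hs : alex_cont s) n (z : Exit R hs n) k :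
  sval (sval (vertex z k)).1 ord0 = sval (sval z).1 k.
Proof. by rewrite /= ffunE /= ffunE. Qed.

Lemma nerve_map_lift (dP dQ : Order.disp_t) (P : porderType dP) (Q : porderType dQ)
  (j : Q -> P) (hj_emb : forall a b : Q, (j a <= j b)%O = (a <= b)%O)
  n (p : Nerve P n) :
  (forall k, exists q, sval p k = j q) ->
  exists q : Nerve Q n, nerve_map (emb_mono hj_emb) n q = p.
Proof.
move=> p_im; pose q k := sval (cid (p_im k)).
have jqK k : j (q k) = sval p k by rewrite /q; case: cid.
have q_mono : nmono [ffun k => q k].
  apply/forallP => a; apply/forallP => b; apply/implyP => ab; rewrite !ffunE.
  by rewrite -hj_emb !jqK; apply: nmonoP (svalP p) ab.
exists (exist (@nmono _ Q n) _ q_mono).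
by apply: val_inj; apply/ffunP => k; rewrite /= !ffunE.
Qed.

Lemma Singmap_lift (R : realType) (X Y : topologicalType) (e : Y -> X)
  (he_cont : forall U : set X, open U -> open (e @^-1` U))
  (he_emb : forall U : set Y, open U -> exists V : set X, open V /\ U = e @^-1` V)
  n (u : Sing R (@open X) n) :
  (forall t, exists y, e y = sval u t) ->
  exists v : Sing R (@open Y) n, Singmap R he_cont n v = u.
Proof.
move=> u_im; pose v t := sval (cid (u_im t)).
have evK t : e (v t) = sval u t by rewrite /v; case: cid.
have v_cont : scont open v.
  move=> U /he_emb [V [oV ->]].
  have -> : v @^-1` (e @^-1` V) = sval u @^-1` V.
    by apply: funext => t; rewrite /preimage /= evK.
  exact: (svalP u V oV).
by exists (exist _ v v_cont); apply: sig_eq; apply: funext => t; apply: evK.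
Qed.

Section ExitEmbedding.
Variables (R : realType) (dP dQ : Order.disp_t) (P : porderType dP) (Q : porderType dQ)
  (X Y : topologicalType) (sX : X -> P) (sY : Y -> Q)
  (hsX : alex_cont sX) (hsY : alex_cont sY) (j : Q -> P) (e : Y -> X).
Hypothesis hj_emb : forall a b : Q, (j a <= j b)%O = (a <= b)%O.
Hypothesis he_cont : forall U : set X, open U -> open (e @^-1` U).
Hypothesis he_inj : injective e.
Hypothesis he_emb : forall U : set Y, open U -> exists V : set X, open V /\ U = e @^-1` V.
Hypothesis he_image : forall x : X, (exists q : Q, sX x = j q) -> exists y : Y, e y = x.
Hypothesis hcomm : forall y : Y, sX (e y) = j (sY y).

Let j_inj : injective j := mono_inj lexx le_anti hj_emb.
Let F := exit_map R hsX hsY (emb_mono hj_emb) he_cont hcomm.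

Lemma exit_map_inj n : injective (@smap _ _ F n).
Proof.
move=> [[p1 u1] h1] [[p2 u2] h2] /(congr1 sval) [/ffunP eq_p /= eq_u].
apply: sig_eq; congr pair.
  by apply: val_inj; apply/ffunP => k; apply: j_inj; move: (eq_p k); rewrite !ffunE.
apply: sig_eq; apply: funext => t; apply: he_inj.
by move: eq_u => /(congr1 (fun f => f t)).
Qed.

Lemma exit_map_full n (z : Exit R hsX n) :
  (forall k, exists w, F 0 w = vertex z k) -> exists w, F n w = z.
Proof.
move=> z_vert; have z_strata k : exists q, sval (sval z).1 k = j q.
  have [w /(congr1 (fun w : Exit R hsX 0 => sval (sval w).1 ord0))] := z_vert k.
  rewrite Exit_vertex_strata; case: w => [[q u] h] /=; rewrite ffunE => <-.
  by exists (sval q ord0).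
have [q jqK] := nerve_map_lift hj_emb z_strata.
have [v evK] : exists v : Sing R (@open Y) n, Singmap R he_cont n v = (sval z).2.
  apply: Singmap_lift => // t; apply: he_image.
  by rewrite -Exit_strata; apply: z_strata.
have qv_pull : pullP (NerveToSing R Q) (Singmap R hsY) (q, v).
  apply: sig_eq; apply: funext => t /=; apply: j_inj.
  by rewrite -hcomm; have := Exit_strata z t; rewrite -jqK -evK /= ffunE.
exists (exist _ (q, v) qv_pull); apply: sig_eq.
have -> : sval (F n (exist _ (q, v) qv_pull)) =
  (nerve_map (emb_mono hj_emb) n q, Singmap R he_cont n v) by [].
by rewrite jqK evK; case: (sval z).
Qed.

End ExitEmbedding.

Theorem lemma2p5 (R : realType)
  (dP : Order.disp_t) (P : porderType dP) (dQ : Order.disp_t) (Q : porderType dQ)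
  (X Y : topologicalType) (sX : X -> P) (sY : Y -> Q)
  (hsX : alex_cont sX) (hsY : alex_cont sY)
  (j : Q -> P) (e : Y -> X)
  (hj_emb : forall a b : Q, (j a <= j b)%O = (a <= b)%O)
  (hj_convex : forall (a c : Q) (b : P), (j a <= b)%O -> (b <= j c)%O ->
                 exists b' : Q, j b' = b)
  (he_cont : forall U : set X, open U -> open (e @^-1` U))
  (he_inj : injective e)
  (he_emb : forall U : set Y, open U -> exists V : set X, open V /\ U = e @^-1` V)
  (he_image : forall x : X, (exists q : Q, sX x = j q) -> exists y : Y, e y = x)
  (hcomm : forall y : Y, sX (e y) = j (sY y)) :
  quasi_category (Exit R hsX) ->
  quasi_category (Exit R hsY) /\
  fully_faithful (exit_map R hsX hsY (emb_mono hj_emb) he_cont hcomm).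
Proof.
move=> qcX; pose F := exit_map R hsX hsY (emb_mono hj_emb) he_cont hcomm.
have F_inj n : injective (@smap _ _ F n) by exact: (exit_map_inj he_inj).
have F_full n (z : Exit R hsX n) :
  (forall k, exists w, F 0 w = vertex z k) -> exists w, F n w = z.
  exact: (exit_map_full he_emb he_image).
split; first exact: quasi_category_full F_inj F_full qcX.
exact: fully_faithful_full F_inj F_full.
Qed.
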